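(* Let $A$ be a commutative ring and $\sigma$ a hereditary torsion theory on $A$-modules such that $A$ is totally $\sigma$-artinian. Then every prime ideal $\mathfrak{p}\in\mathcal{K}(\sigma)$ is a minimal prime ideal of $A$. Consequently $\mathcal{K}(\sigma)=\mathcal{C}(\sigma)$.
   Context: $\mathcal{L}(\sigma)$ is the Gabriel filter of $\sigma$. $A$ is totally $\sigma$-artinian if for every descending chain of ideals $\mathfrak{a}_1\supseteq\mathfrak{a}_2\supseteq\cdots$ there exist $m$ and $\mathfrak{h}\in\mathcal{L}(\sigma)$ with $\mathfrak{a}_m\mathfrak{h}\subseteq\mathfrak{a}_s$ for all $s\ge m$. $\mathcal{K}(\sigma)$ is the set of prime ideals $\mathfrak{p}$ of $A$ with $\mathfrak{p}\notin\mathcal{L}(\sigma)$ (equivalently $A/\mathfrak{p}$ is $\sigma$-torsionfree), and $\mathcal{C}(\sigma)$ is the set of maximal elements of $\mathcal{K}(\sigma)$ under inclusion. *)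

From mathcomp Require Import all_boot all_algebra.
Set Implicit Arguments. Unset Strict Implicit. Unset Printing Implicit Defensive.
Import GRing.Theory.
Local Open Scope ring_scope.

Section Ideals.
Variable R : comPzRingType.

Definition is_ideal (I : R -> Prop) : Prop :=
  [/\ I 0, (forall x y, I x -> I y -> I (x + y)) & (forall a x, I x -> I (a * x))].

Definition subideal (I J : R -> Prop) : Prop := forall x, I x -> J x.

Definition is_prime_ideal (P : R -> Prop) : Prop :=
  [/\ is_ideal P, ~ P 1 & (forall a b, P (a * b) -> P a \/ P b)].

Definition is_minimal_prime (P : R -> Prop) : Prop :=
  is_prime_ideal P /\ (forall Q, is_prime_ideal Q -> subideal Q P -> subideal P Q).

Definition ideal_mul (I J : R -> Prop) : R -> Prop :=
  fun z => exists n (u v : 'I_n -> R),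
    [/\ (forall i, I (u i)), (forall i, J (v i)) & z = \sum_(i < n) u i * v i].

Definition ideal_cap (I J : R -> Prop) : R -> Prop := fun x => I x /\ J x.

Definition ideal_colon (I : R -> Prop) (x : R) : R -> Prop := fun y => I (y * x).

(* Gabriel filter (Gabriel topology) of ideals; hereditary torsion theories sigma
   on R-modules correspond bijectively to Gabriel filters L(sigma). *)
Definition gabriel_filter (L : (R -> Prop) -> Prop) : Prop :=
  [/\ (forall I, L I -> is_ideal I),
      L (fun _ => True),
      (forall I J, L I -> is_ideal J -> subideal I J -> L J) &
      [/\ (forall I J, L I -> L J -> L (ideal_cap I J)),
      (forall I x, L I -> L (ideal_colon I x)) &
      (forall I J, is_ideal J -> L I -> (forall x, I x -> L (ideal_colon J x)) -> L J)]].

Definition totally_artinian (L : (R -> Prop) -> Prop) : Prop :=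
  forall a : nat -> (R -> Prop),
    (forall n, is_ideal (a n)) -> (forall n, subideal (a n.+1) (a n)) ->
    exists m, exists2 h, L h &
      forall s, (m <= s)%N -> subideal (ideal_mul (a m) h) (a s).

Definition Kset (L : (R -> Prop) -> Prop) (P : R -> Prop) : Prop :=
  is_prime_ideal P /\ ~ L P.

Definition Cset (L : (R -> Prop) -> Prop) (P : R -> Prop) : Prop :=
  Kset L P /\ (forall Q, Kset L Q -> subideal P Q -> subideal Q P).

End Ideals.

From mathcomp Require Import all_boot all_algebra.
From Stdlib Require Import Classical.
Set Implicit Arguments. Unset Strict Implicit. Unset Printing Implicit Defensive.
Import GRing.Theory.
Local Open Scope ring_scope.

(* Let Q ⊆ P be primes with P ∉ L(sigma) and suppose some x ∈ P lies outside Q.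
   The ideals a_n = Q + x^n R form a descending chain, so total artinianity
   yields m and h ∈ L(sigma) with a_m h ⊆ a_(m+1).  For y ∈ h this gives
   x^m y = q + x^(m+1) r with q ∈ Q, hence x^m (y - x r) ∈ Q; as Q is prime and
   x ∉ Q, y - x r ∈ Q ⊆ P, and so y ∈ P.  Thus h ⊆ P, and since Gabriel filters
   are closed upwards P ∈ L(sigma), a contradiction; hence P ⊆ Q. *)

Section PowerChain.
Variable R : comPzRingType.
Implicit Types (Q P : R -> Prop) (x y : R).

Definition pow_chain Q x (n : nat) : R -> Prop :=
  fun z => exists q r, Q q /\ z = q + x ^+ n * r.

Lemma pow_chain_ideal Q x n : is_ideal Q -> is_ideal (pow_chain Q x n).
Proof.
case=> Q0 QD QM; split.
- by exists 0, 0; split => //; rewrite mulr0 addr0.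
- move=> _ _ [q1 [r1 [Hq1 ->]]] [q2 [r2 [Hq2 ->]]].
  by exists (q1 + q2), (r1 + r2); split; [exact: QD | rewrite mulrDr addrACA].
- move=> b _ [q [r [Hq ->]]].
  by exists (b * q), (b * r); split; [exact: QM | rewrite mulrDr mulrCA].
Qed.

Lemma pow_chain_decr Q x n : subideal (pow_chain Q x n.+1) (pow_chain Q x n).
Proof.
move=> _ [q [r [Hq ->]]]; exists q, (x * r); split => //.
by rewrite exprSr mulrA.
Qed.

Lemma prime_pow_cancel Q x z (m : nat) :
  is_prime_ideal Q -> ~ Q x -> Q (x ^+ m * z) -> Q z.
Proof.
move=> [_ _ Qprime] nQx; elim: m z => [|m IH] z; first by rewrite expr0 mul1r.
by rewrite exprS -mulrA => /Qprime [/nQx | /IH].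
Qed.

Lemma pow_chain_cancel Q P x y (m : nat) :
  is_prime_ideal Q -> is_ideal P -> subideal Q P -> P x -> ~ Q x ->
  pow_chain Q x m.+1 (x ^+ m * y) -> P y.
Proof.
move=> Qprime [_ PD PM] QP Px nQx [q [r [Hq Exy]]].
have Qdiff : Q (y - x * r).
  apply: (prime_pow_cancel (m := m) Qprime nQx).
  by rewrite mulrBr Exy exprSr -mulrA addrK.
have -> : y = (y - x * r) + r * x by rewrite [r * x]mulrC subrK.
by apply: PD; [exact: QP | exact: PM].
Qed.

Lemma ideal_mul_mem (I J : R -> Prop) u v : I u -> J v -> ideal_mul I J (u * v).
Proof.
move=> Iu Jv; exists 1%N, (fun _ => u), (fun _ => v).
by split => // ; rewrite big_ord1.
Qed.

End PowerChain.

Section TorsionTheory.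
Variable R : comPzRingType.
Variable L : (R -> Prop) -> Prop.
Hypothesis gabrielL : gabriel_filter L.

Lemma Kset_minimal_prime :
  totally_artinian L -> forall P, Kset L P -> is_minimal_prime P.
Proof.
move=> artL P [Pprime nLP]; split => // Q Qprime QP x Px.
apply: NNPP => nQx; apply: nLP.
have [Pideal _ _] := Pprime; have [Qideal _ _] := Qprime.
have [m [h Lh hm]] :=
  artL (pow_chain Q x) (fun n => pow_chain_ideal x n Qideal)
    (@pow_chain_decr R Q x).
have [_ _ Lup _] := gabrielL.
apply: (Lup h P Lh Pideal) => y hy.
apply: (pow_chain_cancel Qprime Pideal QP Px nQx).
apply: (hm m.+1 (leqnSn m)); apply: ideal_mul_mem => //.
by exists 0, 1; split; [case: Qideal | rewrite mulr1 add0r].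
Qed.

End TorsionTheory.

(* If every member of K(sigma) is a minimal prime, then K(sigma) is an
   antichain, so all its elements are maximal: K(sigma) = C(sigma). *)
Lemma Kset_eq_Cset (R : comPzRingType) (L : (R -> Prop) -> Prop) :
  (forall P, Kset L P -> is_minimal_prime P) ->
  forall P, Kset L P <-> Cset L P.
Proof.
move=> Kmin P; split; last by case.
move=> KP; split => // Q KQ PQ.
by have [_ Qmin] := Kmin Q KQ; apply: Qmin => //; case: KP.
Qed.

Theorem mainTheorem15 (R : comPzRingType) (L : (R -> Prop) -> Prop) :
  gabriel_filter L -> totally_artinian L ->
  (forall P, Kset L P -> is_minimal_prime P) /\
  (forall P, Kset L P <-> Cset L P).
Proof.
move=> gabrielL artL.
have Kmin := Kset_minimal_prime gabrielL artL.
by split; [exact: Kmin | exact: Kset_eq_Cset].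
Qed.
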